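(* For $i=1,2$ let $\mathcal{C}_i$ be an $[n,k_i,d_i]_q$ linear code and $\mathcal{C}=\{(\mathbf{u},\mathbf{u}+\mathbf{v}):\mathbf{u}\in\mathcal{C}_1,\mathbf{v}\in\mathcal{C}_2\}$. Fix the Euclidean inner product (resp. the Hermitian inner product, when $q$ is an even power of a prime), with dual denoted $\perp$. Suppose that either (i) $q=2^m$ for some $m$ and $\mathcal{C}_2$ is self-orthogonal, or (ii) both $\mathcal{C}_1$ and $\mathcal{C}_2$ are self-orthogonal. Then: 1) $\mathcal{C}$ is self-orthogonal if and only if $\mathcal{C}_1\subseteq\mathcal{C}_2^{\perp}$, if and only if $\mathcal{C}_2\subseteq\mathcal{C}_1^{\perp}$; 2) $\mathcal{C}$ is LCD if and only if $2\dim(\mathcal{C}_1\cap\mathcal{C}_2^{\perp})=k_1-k_2$; 3) $\mathcal{C}$ is self-dual if and only if $\mathcal{C}_1=\mathcal{C}_2^{\perp}$, if and only if $\mathcal{C}_2=\mathcal{C}_1^{\perp}$.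
   Context: Euclidean inner product $\sum_ix_iy_i$; for $q=p^h$, $h$ even, Hermitian inner product $\sum_ix_iy_i^{\sqrt q}$. With $\perp$ the dual under the chosen inner product, $\mathcal{C}$ is self-orthogonal if $\mathcal{C}\subseteq\mathcal{C}^{\perp}$, self-dual if $\mathcal{C}=\mathcal{C}^{\perp}$, LCD if $\mathcal{C}\cap\mathcal{C}^{\perp}=\{0\}$. *)

From HB Require Import structures.
From mathcomp Require Import all_boot all_order all_algebra all_field.
Set Implicit Arguments. Unset Strict Implicit. Unset Printing Implicit Defensive.
Import GRing.Theory.
Local Open Scope ring_scope.

(* Linear codes of length n over a finite field F = GF(q) are subspaces of 'rV[F]_n. *)

Inductive ipform := Euclidean | Hermitian.

(* The exponent e such that the inner product is sum_i x_i * y_i^e: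
   e = 1 (Euclidean) or e = sqrt q = p^(h/2) where q = p^h (Hermitian). *)
Definition form_exp (F : finFieldType) (f : ipform) : nat :=
  match f with
  | Euclidean => 1
  | Hermitian => let p := pdiv #|F| in (p ^ (logn p #|F|)./2)%N
  end.

(* The Hermitian product is only meaningful when q = p^h with h even. *)
Definition form_ok (F : finFieldType) (f : ipform) : Prop :=
  f = Hermitian -> ~~ odd (logn (pdiv #|F|) #|F|).

Definition ip (F : finFieldType) (f : ipform) (n : nat) (x y : 'rV[F]_n) : F :=
  \sum_(i < n) x 0 i * (y 0 i) ^+ form_exp F f.

Definition dual (F : finFieldType) (f : ipform) (n : nat)
  (C : {vspace 'rV[F]_n}) : {vspace 'rV[F]_n} :=
  <<enum [set x : 'rV[F]_n | [forall c : 'rV[F]_n, (c \in C) ==> (ip f c x == 0%R)]]>>%VS.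

Definition plotkin (F : finFieldType) (n : nat) (C1 C2 : {vspace 'rV[F]_n})
  : {vspace 'rV[F]_(n + n)} :=
  <<enum [set row_mx w.1 (w.1 + w.2) |
          w in [set w : 'rV[F]_n * 'rV[F]_n | (w.1 \in C1) && (w.2 \in C2)]]>>%VS.

Definition self_orthogonal (F : finFieldType) (f : ipform) (n : nat) (C : {vspace 'rV[F]_n}) :=
  (C <= dual f C)%VS.
Definition self_dual (F : finFieldType) (f : ipform) (n : nat) (C : {vspace 'rV[F]_n}) :=
  C = dual f C.
Definition LCD (F : finFieldType) (f : ipform) (n : nat) (C : {vspace 'rV[F]_n}) :=
  (C :&: dual f C)%VS = 0%VS.

From HB Require Import structures.
From mathcomp Require Import all_boot all_order all_algebra all_field.
From mathcomp Require Import zify.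
Set Implicit Arguments. Unset Strict Implicit. Unset Printing Implicit Defensive.
Import GRing.Theory.
Local Open Scope ring_scope.

(* The map [fconj] (the identity, or [x |-> x ^+ sqrt q]) is an involutive automorphism of F,
   so [ip] is a nondegenerate Hermitian-symmetric form and [dual] behaves as an orthogonal
   complement: [\dim C^perp = n - \dim C] and [C^perp^perp = C].  A word [(x | y)] is
   orthogonal to the (u | u+v) code iff [x + y] lies in [C1^perp] and [y] in [C2^perp].
   Either hypothesis makes [C2] self-orthogonal and [2 u] orthogonal to [C1] for [u] in [C1];
   then a codeword [(u | u+v)] is orthogonal to the code iff [u] lies in [C1 :&: C2^perp]
   and [v] in [C2 :&: C1^perp]. This gives 1) at once, 3) by counting dimensions, and 2) through the
   identity [\dim (C1 :&: C2^perp) + k2 = \dim (C2 :&: C1^perp) + k1]. *)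

Section Conjugation.
Variables (F : finFieldType) (f : ipform).

Lemma finField_pdiv_pchar : pdiv #|F| \in [pchar F].
Proof.
have [p pr_p chp] := finPcharP F.
have cF : #|F| = (p ^ logn p #|F|)%N := card_pprimeChar chp.
have logn_gt0 : (0 < logn p #|F|)%N.
  by rewrite -(ltn_exp2l _ _ (prime_gt1 pr_p)) expn0 -cF finNzRing_gt1.
by rewrite cF -(prednK logn_gt0) pdiv_pfactor // prednK.
Qed.

Lemma card_finField_pdiv : #|F| = (pdiv #|F| ^ logn (pdiv #|F|) #|F|)%N.
Proof. exact: card_pprimeChar finField_pdiv_pchar. Qed.

Definition fconj (x : F) := x ^+ form_exp F f.

Lemma fconj_is_nmod_morphism : nmod_morphism fconj.
Proof.
rewrite /fconj; case: f; first by split=> [|x y]; rewrite !expr1.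
have chp := finField_pdiv_pchar.
split=> [|x y]; first by rewrite expr0n expn_eq0 eqn0Ngt pdiv_gt0.
apply: exprDn_pchar; rewrite (eq_pnat _ (pcharf_eq chp)) pnatX pnat_id //.
exact: pcharf_prime chp.
Qed.

Lemma fconj_is_monoid_morphism : monoid_morphism fconj.
Proof. by split=> [|x y]; rewrite /fconj ?expr1n ?exprMn. Qed.

HB.instance Definition _ := GRing.isNmodMorphism.Build F F fconj
  fconj_is_nmod_morphism.
HB.instance Definition _ := GRing.isMonoidMorphism.Build F F fconj
  fconj_is_monoid_morphism.

(* Hermitian case: [(x ^+ sqrt q) ^+ sqrt q = x ^+ q = x]. *)
Lemma fconjK : form_ok F f -> involutive fconj.
Proof.
rewrite /form_ok /fconj => ok x; rewrite -exprM.
case: f ok => [_|/(_ erefl) h_even]; first by rewrite muln1 expr1.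
by rewrite /= -expnD addnn even_halfK // -card_finField_pdiv expf_card.
Qed.

End Conjugation.

Section InnerProduct.
Variables (F : finFieldType) (f : ipform).
Local Notation fconj := (fconj f).

Lemma ipE n (x y : 'rV[F]_n) : ip f x y = \sum_(i < n) x 0 i * fconj (y 0 i).
Proof. by []. Qed.

Lemma ipDl n (x y z : 'rV[F]_n) : ip f (x + y) z = ip f x z + ip f y z.
Proof. by rewrite !ipE -big_split; apply: eq_bigr => i _; rewrite mxE mulrDl. Qed.

Lemma ip0l n (z : 'rV[F]_n) : ip f 0 z = 0.
Proof. by rewrite ipE big1 // => i _; rewrite mxE mul0r. Qed.

Lemma ipZl n a (x z : 'rV[F]_n) : ip f (a *: x) z = a * ip f x z.
Proof. by rewrite !ipE mulr_sumr; apply: eq_bigr => i _; rewrite mxE mulrA. Qed.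

Lemma ip_suml n I (r : seq I) (P : pred I) (X : I -> 'rV[F]_n) z :
  ip f (\sum_(i <- r | P i) X i) z = \sum_(i <- r | P i) ip f (X i) z.
Proof. exact: (big_morph _ (fun x y => ipDl x y z) (ip0l z)). Qed.

Lemma ipDr n (x y z : 'rV[F]_n) : ip f x (y + z) = ip f x y + ip f x z.
Proof.
by rewrite !ipE -big_split; apply: eq_bigr => i _; rewrite mxE rmorphD mulrDr.
Qed.

Lemma ip0r n (x : 'rV[F]_n) : ip f x 0 = 0.
Proof. by rewrite ipE big1 // => i _; rewrite mxE rmorph0 mulr0. Qed.

Lemma ipZr n a (x z : 'rV[F]_n) : ip f x (a *: z) = fconj a * ip f x z.
Proof.
by rewrite !ipE mulr_sumr; apply: eq_bigr => i _; rewrite mxE rmorphM mulrCA.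
Qed.

Lemma ip_sumr n I (r : seq I) (P : pred I) (X : I -> 'rV[F]_n) x :
  ip f x (\sum_(i <- r | P i) X i) = \sum_(i <- r | P i) ip f x (X i).
Proof. exact: (big_morph _ (ipDr x) (ip0r x)). Qed.

Lemma ip_sym : form_ok F f -> forall n (x y : 'rV[F]_n), ip f y x = fconj (ip f x y).
Proof.
move=> ok n x y; rewrite !ipE rmorph_sum; apply: eq_bigr => i _.
by rewrite rmorphM /= fconjK // mulrC.
Qed.

Lemma ip_row_mx n1 n2 (x1 y1 : 'rV[F]_n1) (x2 y2 : 'rV[F]_n2) :
  ip f (row_mx x1 x2) (row_mx y1 y2) = ip f x1 y1 + ip f x2 y2.
Proof.
rewrite !ipE big_split_ord /=.
by congr (_ + _); apply: eq_bigr => i _; rewrite ?row_mxEl ?row_mxEr.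
Qed.

Lemma ip_delta_mx n (i : 'I_n) (x : 'rV[F]_n) : ip f (delta_mx 0 i) x = fconj (x 0 i).
Proof.
rewrite ipE (bigD1 i) //= big1 ?addr0 => [|j ji]; first by rewrite mxE !eqxx mul1r.
by rewrite mxE eqxx (negbTE ji) mul0r.
Qed.

End InnerProduct.

Lemma dim_rV (F : fieldType) m : \dim (fullv : {vspace 'rV[F]_m}) = m.
Proof. by rewrite dimvf /dim /= mul1n. Qed.

Lemma dimv_leq (F : fieldType) m (C : {vspace 'rV[F]_m}) : (\dim C <= m)%N.
Proof. by rewrite -[X in (_ <= X)%N](dim_rV F) dimvS ?subvf. Qed.

Lemma capv0P (K : fieldType) (vT : vectType K) (U V : {vspace vT}) :
  reflect (forall x, x \in U -> x \in V -> x = 0) (U :&: V == 0)%VS.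
Proof.
rewrite -subv0; apply: (iffP subvP) => [UV0 x xU xV | UV0 x /memv_capP [xU xV]].
  by apply/eqP; rewrite -memv0 UV0 // memv_cap xU.
by rewrite memv0 (UV0 x xU xV).
Qed.

Section Dual.
Variables (F : finFieldType) (f : ipform) (n : nat).
Implicit Types (C U V : {vspace 'rV[F]_n}) (x : 'rV[F]_n).

(* Restated so that [lia] sees [\dim] at the same instance as the statements of this
   section do. *)
Let dimv_leqn C : (\dim C <= n)%N := dimv_leq C.

Lemma mem_dual C x : reflect (forall c, c \in C -> ip f c x = 0) (x \in dual f C).
Proof.
rewrite /dual; set S := finset _.
have memS y : reflect (forall c, c \in C -> ip f c y = 0) (y \in S).
  rewrite inE; apply: (iffP forallP) => [H c cC | H c]; first exact/eqP/(implyP (H c)).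
  by apply/implyP => /H ->.
apply: (iffP idP) => [xS c cC | /memS xS]; last by apply: memv_span; rewrite mem_enum.
rewrite (coord_span (X := in_tuple (enum S)) xS) ip_sumr big1 // => i _.
have /memS Si : (in_tuple (enum S))`_i \in S by rewrite -mem_enum mem_nth ?size_tuple.
by rewrite ipZr Si // mulr0.
Qed.

Lemma dual_add U V : dual f (U + V) = (dual f U :&: dual f V)%VS.
Proof.
apply/vspaceP => x; rewrite memv_cap.
apply/mem_dual/andP => [H | [/mem_dual H1 /mem_dual H2]].
  by split; apply/mem_dual => c c_in; apply: H; move: c_in; apply/subvP;
    rewrite ?addvSl ?addvSr.
by move=> c /memv_addP [u uU [v vV ->]]; rewrite ipDl H1 // H2 // addr0.
Qed.

Lemma dual_fullv : dual f (fullv : {vspace 'rV[F]_n}) = 0%VS.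
Proof.
apply/vspaceP => x; rewrite memv0; apply/mem_dual/eqP => [H | -> c _]; last exact: ip0r.
by apply/rowP => i; apply/eqP; rewrite mxE -(fmorph_eq0 (fconj f)) /= -ip_delta_mx H ?memvf.
Qed.

Lemma double_mem_dual C :
  (exists m, #|F| = (2 ^ m)%N) \/ self_orthogonal f C ->
  {in C, forall u, u *+ 2 \in dual f C}.
Proof.
case=> [[m cardF] | C_so] u uC; last by rewrite rpredMn // (subvP C_so).
have pchar2 : 2 \in [pchar F] := card_finPcharP cardF (isT : prime 2).
by rewrite -scaler_nat (pcharf0 pchar2) scale0r mem0v.
Qed.

Hypothesis ok : form_ok F f.

Definition conj_vbasis_mx C : 'M[F]_(n, \dim C) :=
  \matrix_(i, j) fconj f ((vbasis C)`_j 0 i).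

Lemma mulmx_conj_vbasis C x j : (x *m conj_vbasis_mx C) 0 j = ip f x (vbasis C)`_j.
Proof. by rewrite !mxE ipE; apply: eq_bigr => i _; rewrite mxE. Qed.

(* [ip_sym] trades [ip f c x = 0], semilinear in [x], for the linear condition [ip f x c = 0]. *)
Lemma dual_lker C : dual f C = lker (linfun (mulmxr (conj_vbasis_mx C))).
Proof.
apply/vspaceP => x; rewrite memv_ker lfunE /=; apply/mem_dual/eqP => [H | Mx0 c cC].
  apply/rowP => j; rewrite mulmx_conj_vbasis mxE ip_sym // H ?rmorph0 //.
  by apply: vbasis_mem; rewrite mem_nth ?size_tuple.
rewrite (coord_vbasis cC) ip_suml big1 // => j _.
by rewrite ipZl ip_sym // -mulmx_conj_vbasis Mx0 mxE rmorph0 mulr0.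
Qed.

Lemma dim_dual C : \dim (dual f C) = (n - \dim C)%N.
Proof.
have dual_ge U : (n - \dim U <= \dim (dual f U))%N.
  rewrite dual_lker; set L := linfun _.
  have := limg_ker_dim L fullv; rewrite capfv dim_rV => dimL.
  by rewrite -[X in (X - _ <= _)%N]dimL leq_subLR addnC leq_add2r dimv_leq.
have dimC_le : (\dim C <= \dim (dual f C^C))%N.
  by have := dual_ge C^C%VS; rewrite dimv_compl dim_rV subKn ?dimv_leq.
have dim_sum_le : (\dim (dual f C) + \dim (dual f C^C) <= n)%N.
  by rewrite -dimv_sum_cap -dual_add addv_complf dual_fullv dimv0 addn0 dimv_leq.
apply/eqP; rewrite eqn_leq dual_ge andbT leq_subRL ?dimv_leq //.
by rewrite (leq_trans _ dim_sum_le) // addnC leq_add2l.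
Qed.

Lemma orth_sym U V : (U <= dual f V)%VS = (V <= dual f U)%VS.
Proof.
wlog suff: U V / (U <= dual f V)%VS -> (V <= dual f U)%VS by move=> H; apply/idP/idP; apply: H.
move/subvP => UV; apply/subvP => v vV; apply/mem_dual => u uU.
by rewrite ip_sym //; move/mem_dual: (UV u uU) => -> //; rewrite rmorph0.
Qed.

Lemma dual_dual C : dual f (dual f C) = C.
Proof.
by apply/eqP; rewrite eq_sym eqEdim orth_sym subvv !dim_dual subKn ?dimv_leq ?leqnn.
Qed.

Lemma eq_dualE U V : (U == dual f V) = (U <= dual f V)%VS && (\dim U + \dim V == n)%N.
Proof.
rewrite eqEdim dim_dual; case UV: (U <= dual f V)%VS => //=.
have := dimvS UV; rewrite dim_dual; have := dimv_leqn V.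
by move=> *; apply/idP/eqP; lia.
Qed.

Lemma dim_cap_dual U V :
  (\dim (U :&: dual f V) + \dim V = \dim (V :&: dual f U) + \dim U)%N.
Proof.
have := dimv_sum_cap U (dual f V); have := dim_dual (U + dual f V).
rewrite dual_add dual_dual capvC dim_dual.
have := dimv_leqn V; have := dimv_leqn (U + dual f V); lia.
Qed.

Lemma cap_dual_eq0_dim U V :
  (U :&: dual f V = 0 /\ V :&: dual f U = 0)%VS <->
  (2 * \dim (U :&: dual f V))%N%:Z = (\dim U)%:Z - (\dim V)%:Z.
Proof.
have dimE := dim_cap_dual U V; split => [[A0 B0] | dim2].
  by move: dimE; rewrite A0 B0 !dimv0; lia.
by split; apply/eqP; rewrite -dimv_eq0; apply/eqP; lia.
Qed.

End Dual.

Lemma span_enum_set (F : finFieldType) m (S : {set 'rV[F]_m}) (U : {vspace 'rV[F]_m}) :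
  S =i U -> <<enum S>>%VS = U.
Proof.
move=> eqSU; apply/vspaceP => x; apply/idP/idP => [|Ux].
  by apply/subvP; apply/span_subvP => y; rewrite mem_enum eqSU.
by rewrite memv_span ?mem_enum ?eqSU.
Qed.

Section Plotkin.
Variables (F : finFieldType) (n : nat) (C1 C2 : {vspace 'rV[F]_n}).

Definition dup_lfun := linfun (@mulmxr F 1 n (n + n) (row_mx 1%:M 1%:M)).
Definition rshift_lfun := linfun (@mulmxr F 1 n (n + n) (row_mx 0 1%:M)).

Lemma dup_lfunE u : dup_lfun u = row_mx u u.
Proof. by rewrite lfunE /= mul_mx_row mulmx1. Qed.

Lemma rshift_lfunE v : rshift_lfun v = row_mx 0 v.
Proof. by rewrite lfunE /= mul_mx_row mulmx1 mulmx0. Qed.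

Lemma mem_plotkin_sum z :
  reflect (exists u v, [/\ u \in C1, v \in C2 & z = row_mx u (u + v)])
    (z \in dup_lfun @: C1 + rshift_lfun @: C2)%VS.
Proof.
apply: (iffP memv_addP) =>
  [[_ /memv_imgP [u uC1 ->] [_ /memv_imgP [v vC2 ->] ->]] | [u [v [uC1 vC2 ->]]]].
  by exists u, v; rewrite dup_lfunE rshift_lfunE add_row_mx addr0.
exists (dup_lfun u); rewrite ?memv_img //; exists (rshift_lfun v); rewrite ?memv_img //.
by rewrite dup_lfunE rshift_lfunE add_row_mx addr0.
Qed.

Lemma plotkinE : plotkin C1 C2 = (dup_lfun @: C1 + rshift_lfun @: C2)%VS.
Proof.
apply: span_enum_set => z; apply/imsetP/mem_plotkin_sum => [[[u v]] | [u [v [uC1 vC2 ->]]]].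
  by rewrite inE /= => /andP [uC1 vC2] ->; exists u, v.
by exists (u, v); rewrite // inE /= uC1 vC2.
Qed.

Lemma mem_plotkin z :
  reflect (exists u v, [/\ u \in C1, v \in C2 & z = row_mx u (u + v)]) (z \in plotkin C1 C2).
Proof. by rewrite plotkinE; apply: mem_plotkin_sum. Qed.

Lemma dim_plotkin : \dim (plotkin C1 C2) = (\dim C1 + \dim C2)%N.
Proof.
have dup_inj : lker dup_lfun = 0%VS.
  by apply/eqP/lker0P => u v; rewrite !dup_lfunE => /eq_row_mx [].
have rshift_inj : lker rshift_lfun = 0%VS.
  by apply/eqP/lker0P => u v; rewrite !rshift_lfunE => /eq_row_mx [].
rewrite plotkinE dimv_disjoint_sum ?limg_dim_eq ?dup_inj ?rshift_inj ?capv0 //.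
apply/vspaceP => z; rewrite memv0 memv_cap.
apply/andP/eqP => [[/memv_imgP [u _ ->] /memv_imgP [v _]] | ->]; last by rewrite !mem0v.
by rewrite dup_lfunE rshift_lfunE => /eq_row_mx [-> _]; rewrite row_mx0.
Qed.

End Plotkin.

Section PlotkinDual.
Variables (F : finFieldType) (f : ipform) (n : nat) (C1 C2 : {vspace 'rV[F]_n}).
Local Notation P := (plotkin C1 C2).

Lemma mem_dual_plotkin x y :
  (row_mx x y \in dual f P) = (x + y \in dual f C1) && (y \in dual f C2).
Proof.
apply/mem_dual/andP =>
  [H | [/mem_dual H1 /mem_dual H2] _ /mem_plotkin [u [v [uC1 vC2 ->]]]].
  split; apply/mem_dual => c cC.
    have := H (row_mx c c); rewrite ip_row_mx -ipDr; apply.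
    by apply/mem_plotkin; exists c, 0; rewrite mem0v addr0.
  have := H (row_mx 0 c); rewrite ip_row_mx ip0l add0r; apply.
  by apply/mem_plotkin; exists 0, c; rewrite mem0v add0r.
by rewrite ip_row_mx ipDl addrA -ipDr H1 // H2 // addr0.
Qed.

Hypotheses (ok : form_ok F f) (C2_so : self_orthogonal f C2).
Hypothesis C1_double : {in C1, forall u, u *+ 2 \in dual f C1}.

Lemma plotkin_self_orthogonal : (P <= dual f P)%VS = (C1 <= dual f C2)%VS.
Proof.
apply/idP/idP => [/subvP PP | C12].
  apply/subvP => u uC1.
  have : row_mx u u \in P by apply/mem_plotkin; exists u, 0; rewrite mem0v addr0.
  by move/PP; rewrite mem_dual_plotkin => /andP [].
have C21 : (C2 <= dual f C1)%VS by rewrite -orth_sym.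
apply/subvP => _ /mem_plotkin [u [v [uC1 vC2 ->]]].
rewrite mem_dual_plotkin addrA -mulr2n; apply/andP; split; apply: rpredD.
- exact: C1_double.
- exact: subvP C21 _ vC2.
- exact: subvP C12 _ uC1.
- exact: subvP C2_so _ vC2.
Qed.

Lemma plotkin_LCD :
  LCD f P <-> (C1 :&: dual f C2 = 0 /\ C2 :&: dual f C1 = 0)%VS.
Proof.
rewrite /LCD; split => [/eqP/capv0P P0 | [/eqP/capv0P A0 /eqP/capv0P B0]].
  split; apply/eqP/capv0P => w wC w_dual.
    have /P0 : row_mx w w \in P by apply/mem_plotkin; exists w, 0; rewrite mem0v addr0.
    rewrite mem_dual_plotkin -mulr2n C1_double // w_dual => /(_ isT)/eqP.
    by rewrite row_mx_eq0 => /andP [/eqP].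
  have /P0 : row_mx 0 w \in P by apply/mem_plotkin; exists 0, w; rewrite mem0v add0r.
  rewrite mem_dual_plotkin add0r w_dual (subvP C2_so) // => /(_ isT)/eqP.
  by rewrite row_mx_eq0 => /andP [_ /eqP].
apply/eqP/capv0P => _ /mem_plotkin [u [v [uC1 vC2 ->]]].
rewrite mem_dual_plotkin => /andP [uuv_dual uv_dual].
have u_dual : u \in dual f C2 by rewrite -(addrK v u) rpredB // (subvP C2_so).
have u0 := A0 u uC1 u_dual; rewrite u0 !add0r in uuv_dual *.
by rewrite (B0 v vC2 uuv_dual) row_mx0.
Qed.

Lemma plotkin_self_dual : self_dual f P <-> C1 = dual f C2.
Proof.
have eqE : (P == dual f P) = (C1 == dual f C2).
  rewrite !eq_dualE // plotkin_self_orthogonal dim_plotkin.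
  by case: (C1 <= _)%VS => //=; apply/eqP/eqP; lia.
by rewrite /self_dual; split=> /eqP H; apply/eqP; [rewrite -eqE | rewrite eqE].
Qed.

End PlotkinDual.

Theorem corollary3 (F : finFieldType) (f : ipform) (n : nat)
  (C1 C2 : {vspace 'rV[F]_n}) :
  form_ok F f ->
  ((exists m : nat, #|F| = (2 ^ m)%N) /\ self_orthogonal f C2 \/
   self_orthogonal f C1 /\ self_orthogonal f C2) ->
  let C := plotkin C1 C2 in
  ((self_orthogonal f C <-> (C1 <= dual f C2)%VS) /\
   ((C1 <= dual f C2)%VS <-> (C2 <= dual f C1)%VS)) /\
  (LCD f C <-> ((2 * \dim (C1 :&: dual f C2))%N%:Z = (\dim C1)%:Z - (\dim C2)%:Z)) /\
  ((self_dual f C <-> C1 = dual f C2) /\ (C1 = dual f C2 <-> C2 = dual f C1)).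
Proof.
move=> ok hyp C.
have C2_so : self_orthogonal f C2 by case: hyp => [[] | []].
have C1_double : {in C1, forall u, u *+ 2 \in dual f C1}.
  by apply: double_mem_dual; case: hyp => [[card2 _] | [C1_so _]]; [left | right].
split; first by rewrite /self_orthogonal plotkin_self_orthogonal // orth_sym.
split; first exact: iff_trans (plotkin_LCD C2_so C1_double) (cap_dual_eq0_dim ok C1 C2).
split; first exact: plotkin_self_dual ok C2_so C1_double.
by split=> ->; rewrite dual_dual.
Qed.
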